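(* The linear subspace $\mathsf{CDUC}_d$ of linear maps on $\mathcal{M}_d(\mathbb{C})$ is stable under composition, but $\mathsf{DUC}_d$ is not. Moreover, for pairs $(A_1,B_1),(A_2,B_2)$ of $d\times d$ complex matrices with $\operatorname{diag}(A_k)=\operatorname{diag}(B_k)$, and for $i,j\in\{1,2\}$: if $i=j$ then $\Phi^{(i)}_{(A_1,B_1)}\circ\Phi^{(j)}_{(A_2,B_2)}=\Phi^{(2)}_{(\mathfrak A,\mathfrak B)}$, and if $i\ne j$ then $\Phi^{(i)}_{(A_1,B_1)}\circ\Phi^{(j)}_{(A_2,B_2)}=\Phi^{(1)}_{(\mathfrak A,\mathfrak B)}$, where in both cases $(\mathfrak A,\mathfrak B)=(A_1,B_1)\circ_i(A_2,B_2)$.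
   Context: $\mathcal{DU}_d$ is the group of diagonal unitary $d\times d$ matrices. A linear map $\Phi$ on $\mathcal{M}_d(\mathbb{C})$ is DUC if $\Phi(UXU^* )=U^*\Phi(X)U$ for all $X$ and $U\in\mathcal{DU}_d$, and CDUC if $\Phi(UXU^* )=U\Phi(X)U^*$; $\mathsf{DUC}_d$, $\mathsf{CDUC}_d$ are the sets of such maps. A set $K$ of maps is stable under composition if $\Phi_1\circ\Phi_2\in K$ for all $\Phi_1,\Phi_2\in K$. Notation: $\odot$ is entrywise product; $\operatorname{diag}B$ is the diagonal matrix with the diagonal of $B$, $\widetilde B=B-\operatorname{diag}B$, $|\operatorname{diag}X\rangle$ is the vector of diagonal entries of $X$ and $\operatorname{diag}(v)$ the diagonal matrix with diagonal $v$. For a pair $(A,B)$ with equal diagonals, $\Phi^{(1)}_{(A,B)}(X)=\operatorname{diag}(A|\operatorname{diag}X\rangle)+\widetilde B\odot X^\top$ and $\Phi^{(2)}_{(A,B)}(X)=\operatorname{diag}(A|\operatorname{diag}X\rangle)+\widetilde B\odot X$. The compositions are $(A_1,B_1)\circ_1(A_2,B_2)=(A_1A_2,\ B_1\odot B_2^\top+\operatorname{diag}(A_1A_2-B_1\odot B_2))$ and $(A_1,B_1)\circ_2(A_2,B_2)=(A_1A_2,\ B_1\odot B_2+\operatorname{diag}(A_1A_2-B_1\odot B_2))$. *)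

From HB Require Import structures.
From mathcomp Require Import all_boot all_order all_algebra.
From mathcomp Require Import complex.
From mathcomp Require Import reals.
Set Implicit Arguments. Unset Strict Implicit. Unset Printing Implicit Defensive.
Import Order.TTheory GRing.Theory Num.Theory.
Local Open Scope ring_scope.

Section Defs.
Variable C : numClosedFieldType.
Variable d : nat.
Local Notation M := 'M[C]_d.

Definition adjmx (U : M) : M := (map_mx Num.conj U)^T.

Definition diag_unitary (U : M) : Prop :=
  is_diag_mx U /\ U *m adjmx U = 1%:M.

Definition linmap (f : M -> M) : Prop :=
  forall (a : C) (X Y : M), f (a *: X + Y) = a *: f X + f Y.

Definition DUC (f : M -> M) : Prop :=
  linmap f /\ forall U X, diag_unitary U -> f (U *m X *m adjmx U) = adjmx U *m f X *m U.

Definition CDUC (f : M -> M) : Prop :=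
  linmap f /\ forall U X, diag_unitary U -> f (U *m X *m adjmx U) = U *m f X *m adjmx U.

Definition stable_comp (K : (M -> M) -> Prop) : Prop :=
  forall f g, K f -> K g -> K (f \o g).

Definition hadamard (A B : M) : M := \matrix_(i, j) (A i j * B i j).

Definition diagv (X : M) : 'cV[C]_d := \col_i X i i.
Definition diagm (v : 'cV[C]_d) : M := diag_mx v^T.
Definition diagpart (B : M) : M := diagm (diagv B).
Definition offdiag (B : M) : M := B - diagpart B.

Definition Phi1 (A B : M) (X : M) : M :=
  diagm (A *m diagv X) + hadamard (offdiag B) X^T.
Definition Phi2 (A B : M) (X : M) : M :=
  diagm (A *m diagv X) + hadamard (offdiag B) X.

Definition comp1 (A1 B1 A2 B2 : M) : M * M :=
  (A1 *m A2, hadamard B1 B2^T + diagpart (A1 *m A2 - hadamard B1 B2)).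
Definition comp2 (A1 B1 A2 B2 : M) : M * M :=
  (A1 *m A2, hadamard B1 B2 + diagpart (A1 *m A2 - hadamard B1 B2)).

End Defs.

(* For CDUC the two covariance relations compose directly.  For DUC they do not:
   the transpose is DUC but its square, the identity, is not, since conjugating the
   matrix unit E_01 by U = diag(i, 1, ..., 1) gives i E_01 on one side and -i E_01
   on the other.  The composition rules are entrywise computations: every
   Phi^(k) acts on the diagonal by v |-> A v and multiplies off-diagonal entries
   by those of B, transposing for k = 1. *)

From HB Require Import structures.
From mathcomp Require Import all_boot all_order all_algebra.
From mathcomp Require Import complex.
From mathcomp Require Import reals.
Import Order.TTheory GRing.Theory Num.Theory.
Local Open Scope ring_scope.

Section Covariance.
Variables (C : numClosedFieldType) (d : nat).

Lemma CDUC_comp : stable_comp (@CDUC C d).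
Proof.
move=> f g [lin_f cov_f] [lin_g cov_g]; split=> [a X Y | U X UU] /=.
  by rewrite lin_g lin_f.
by rewrite cov_g // cov_f.
Qed.

Lemma adjmx_diag_mx (r : 'rV[C]_d) : adjmx (diag_mx r) = diag_mx (map_mx Num.conj r).
Proof. by rewrite /adjmx map_diag_mx tr_diag_mx. Qed.

Lemma trmx_DUC : DUC (@trmx C d d).
Proof.
split=> [a X Y | U X [/diag_mxP [r ->] _]].
  by apply/matrixP=> i j; rewrite !mxE.
by rewrite adjmx_diag_mx !trmx_mul !tr_diag_mx mulmxA.
Qed.

Lemma diag_unitary_diag_mx (r : 'rV[C]_d) :
  (forall k, r 0 k * (r 0 k)^* = 1) -> diag_unitary (diag_mx r).
Proof.
move=> r_unit; split; first exact: diag_mx_is_diag.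
rewrite adjmx_diag_mx mul_diag_mx; by apply/matrixP=> i j; rewrite !mxE mulrnAr r_unit.
Qed.

End Covariance.

Lemma id_notDUC (C : numClosedFieldType) (n : nat) : ~ DUC (@id 'M[C]_n.+2).
Proof.
move=> [_ covariant].
pose r : 'rV[C]_n.+2 := \row_k (if k == 0 then 'i else 1).
have U_unitary : diag_unitary (diag_mx r).
  apply: diag_unitary_diag_mx => k; rewrite mxE.
  by case: ifP => _; rewrite ?conjCi ?mulrN ?mulCii ?opprK ?conjC1 ?mulr1.
have := covariant _ (delta_mx 0 1) U_unitary.
rewrite /= adjmx_diag_mx !mul_diag_mx !mul_mx_diag => /matrixP /(_ 0 1).
rewrite !mxE /= conjC1 !mulr1 conjCi => /eqP.
by rewrite -subr_eq0 opprK -mulr2n mulrn_eq0 /= (negPf (@neq0Ci C)).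
Qed.

Lemma DUC_not_stable_comp (C : numClosedFieldType) (d : nat) :
  (2 <= d)%N -> ~ stable_comp (@DUC C d).
Proof.
case: d => [|[|n]] // _ DUC_comp.
have [_ covariant] := DUC_comp _ _ (@trmx_DUC C n.+2) (@trmx_DUC C n.+2).
apply: (@id_notDUC C n); split=> // U X UU.
by have := covariant U X UU; rewrite /= !trmxK.
Qed.

Section Composition.
Variables (C : numClosedFieldType) (d : nat).
Implicit Types A B X : 'M[C]_d.

Lemma Phi1E A B X i j :
  Phi1 A B X i j = if i == j then (A *m diagv X) i 0 else B i j * X j i.
Proof.
rewrite /Phi1 /offdiag /diagpart /diagm /diagv /hadamard !mxE.
by case: eqP => [-> | _]; rewrite ?subrr ?mul0r ?addr0 ?subr0 ?add0r.
Qed.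

Lemma Phi2E A B X i j :
  Phi2 A B X i j = if i == j then (A *m diagv X) i 0 else B i j * X i j.
Proof.
rewrite /Phi2 /offdiag /diagpart /diagm /diagv /hadamard !mxE.
by case: eqP => [-> | _]; rewrite ?subrr ?mul0r ?addr0 ?subr0 ?add0r.
Qed.

Lemma diagv_Phi1 A B X : diagv (Phi1 A B X) = A *m diagv X.
Proof. by apply/matrixP=> i k; rewrite ord1 mxE Phi1E eqxx. Qed.

Lemma diagv_Phi2 A B X : diagv (Phi2 A B X) = A *m diagv X.
Proof. by apply/matrixP=> i k; rewrite ord1 mxE Phi2E eqxx. Qed.

Lemma comp1_offdiagE A1 B1 A2 B2 i j : i != j ->
  (comp1 A1 B1 A2 B2).2 i j = B1 i j * B2 j i.
Proof. by move=> /negPf ij; rewrite /= /diagpart /diagm !mxE ij addr0. Qed.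

Lemma comp2_offdiagE A1 B1 A2 B2 i j : i != j ->
  (comp2 A1 B1 A2 B2).2 i j = B1 i j * B2 i j.
Proof. by move=> /negPf ij; rewrite /= /diagpart /diagm !mxE ij addr0. Qed.

Lemma Phi1_Phi1 A1 B1 A2 B2 X :
  Phi1 A1 B1 (Phi1 A2 B2 X) = Phi2 (comp1 A1 B1 A2 B2).1 (comp1 A1 B1 A2 B2).2 X.
Proof.
apply/matrixP=> i j; rewrite Phi1E [RHS]Phi2E diagv_Phi1 mulmxA.
case: eqP => [_ // | /eqP ij].
by rewrite Phi1E eq_sym (negPf ij) comp1_offdiagE // mulrA.
Qed.

Lemma Phi2_Phi2 A1 B1 A2 B2 X :
  Phi2 A1 B1 (Phi2 A2 B2 X) = Phi2 (comp2 A1 B1 A2 B2).1 (comp2 A1 B1 A2 B2).2 X.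
Proof.
apply/matrixP=> i j; rewrite Phi2E [RHS]Phi2E diagv_Phi2 mulmxA.
case: eqP => [_ // | /eqP ij].
by rewrite Phi2E (negPf ij) comp2_offdiagE // mulrA.
Qed.

Lemma Phi1_Phi2 A1 B1 A2 B2 X :
  Phi1 A1 B1 (Phi2 A2 B2 X) = Phi1 (comp1 A1 B1 A2 B2).1 (comp1 A1 B1 A2 B2).2 X.
Proof.
apply/matrixP=> i j; rewrite Phi1E [RHS]Phi1E diagv_Phi2 mulmxA.
case: eqP => [_ // | /eqP ij].
by rewrite Phi2E eq_sym (negPf ij) comp1_offdiagE // mulrA.
Qed.

Lemma Phi2_Phi1 A1 B1 A2 B2 X :
  Phi2 A1 B1 (Phi1 A2 B2 X) = Phi1 (comp2 A1 B1 A2 B2).1 (comp2 A1 B1 A2 B2).2 X.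
Proof.
apply/matrixP=> i j; rewrite Phi2E [RHS]Phi1E diagv_Phi1 mulmxA.
case: eqP => [_ // | /eqP ij].
by rewrite Phi1E (negPf ij) comp2_offdiagE // mulrA.
Qed.

End Composition.

Theorem proposition4p4 (R : realType) (d : nat) :
  stable_comp (@CDUC R[i] d)
  /\ ((2 <= d)%N -> ~ stable_comp (@DUC R[i] d))
  /\ (forall A1 B1 A2 B2 : 'M[R[i]]_d,
        diagpart A1 = diagpart B1 -> diagpart A2 = diagpart B2 ->
        [/\ forall X, Phi1 A1 B1 (Phi1 A2 B2 X)
                      = Phi2 (comp1 A1 B1 A2 B2).1 (comp1 A1 B1 A2 B2).2 X,
            forall X, Phi2 A1 B1 (Phi2 A2 B2 X)
                      = Phi2 (comp2 A1 B1 A2 B2).1 (comp2 A1 B1 A2 B2).2 X,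
            forall X, Phi1 A1 B1 (Phi2 A2 B2 X)
                      = Phi1 (comp1 A1 B1 A2 B2).1 (comp1 A1 B1 A2 B2).2 X
          & forall X, Phi2 A1 B1 (Phi1 A2 B2 X)
                      = Phi1 (comp2 A1 B1 A2 B2).1 (comp2 A1 B1 A2 B2).2 X]).
Proof.
split; [exact: CDUC_comp | split; first exact: DUC_not_stable_comp].
move=> A1 B1 A2 B2 _ _.
by split; [exact: Phi1_Phi1 | exact: Phi2_Phi2 | exact: Phi1_Phi2 | exact: Phi2_Phi1].
Qed.
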